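(* Let $l\ge2$, $d\ge2$. For $u\in\sigma^\vee\cap M$ with $\deg(u)=N(l-1)d$ one has $0\le\varphi(u)\le(l-1)N$. Moreover there is a constant $C(l,d)$ depending only on $l,d$ such that for all sufficiently large $N$ and all integers $0\le m\le(l-1)N$, $$\Big|\#\{u\in\sigma^\vee\cap M:\varphi(u)=m,\ \deg(u)=Nd(l-1)\}-d^{ld-1}\frac{(N(l-1)-m)^{l(d-1)-1}}{(l(d-1)-1)!}\Big|\le C(l,d)N^{l(d-1)-2}.$$
   Context: $\mathbf{Z}^{ld}$ has basis $e_{ij}$ ($1\le i\le l,1\le j\le d$), $\epsilon_i=\sum_je_{ij}$, $M=\mathbf{Z}^{ld}/\langle\epsilon_1-\epsilon_2,\dots,\epsilon_1-\epsilon_l\rangle$ with images $e_{ij}$, $\epsilon$; $\sigma^\vee\subset M_\mathbf{R}$ is the cone generated by the $e_{ij}$. $\deg\colon M\to\mathbf{Z}$ is the homomorphism with $\deg(e_{ij})=1$. $\varphi\colon M_\mathbf{R}\to\mathbf{R}$ is defined by $\varphi(u)=\sum_{i=1}^l\min_{1\le j\le d}a_{ij}$ for any representative $u=\sum a_{ij}e_{ij}$ (this is independent of the representative). *)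

From Stdlib Require Import Rdefinitions.
From HB Require Import structures.
From mathcomp Require Import all_boot all_order all_algebra.
From mathcomp Require Import Rstruct.
Set Implicit Arguments. Unset Strict Implicit. Unset Printing Implicit Defensive.
Import Order.TTheory GRing.Theory Num.Theory.
Local Open Scope ring_scope.

(* Z^{ld}: integer matrices x with entries x i j  (1<=i<=l, 1<=j<=d),
   i.e. x = sum_{ij} x i j * e_ij.  Rows are indexed by 'I_l, index 0 being
   the paper's i = 1. *)
Definition Zld (l d : nat) := 'M[int]_(l, d).

(* x lies in the sublattice generated by eps_1 - eps_k (k = 2..l):
   x = sum_{k>=2} t_k (eps_1 - eps_k), written coefficientwise. *)
Definition inL (l d : nat) (x : Zld l d) : Prop :=
  exists t : 'I_l -> int, forall (i : 'I_l) (j : 'I_d),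
    x i j = if val i == 0%N then \sum_(k : 'I_l | val k != 0%N) t k else - t i.

(* Two representatives define the same element of M. *)
Definition equivM (l d : nat) (a b : Zld l d) : Prop := inL (a - b).

(* The image of a in M lies in sigma^vee (the real cone in M_R generated by
   the e_ij): some nonnegative real combination sum x_ij e_ij has the same
   image in M_R = R^{ld} / <eps_1 - eps_k>_R. *)
Definition in_cone (l d : nat) (a : Zld l d) : Prop :=
  exists x : 'M[R]_(l, d), (forall i j, 0 <= x i j) /\
    exists t : 'I_l -> R, forall (i : 'I_l) (j : 'I_d),
      x i j - (a i j)%:~R =
        if val i == 0%N then \sum_(k : 'I_l | val k != 0%N) t k else - t i.

Definition degM (l d : nat) (a : Zld l d) : int := \sum_i \sum_j a i j.

(* min_{1<=j<=d} a_ij  (for d >= 1; the seed is one of the entries). *)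
Definition rowmin (l d : nat) (a : Zld l d) (i : 'I_l) : int :=
  \big[Num.min/head 0 [seq a i j | j <- enum 'I_d]]_(j : 'I_d) a i j.

Definition phiM (l d : nat) (a : Zld l d) : int := \sum_i rowmin a i.

Definition Pset (l d N m : nat) (a : Zld l d) : Prop :=
  in_cone a /\ phiM a = m%:Z /\ degM a = (N * d * (l - 1))%:Z.

(* s is a complete, irredundant system of representatives of the elements
   of M satisfying P; hence size s = #{u in M : P u}. *)
Definition reps_of (l d : nat) (P : Zld l d -> Prop) (s : seq (Zld l d)) : Prop :=
  (forall a, a \in s -> P a) /\
  (forall a, P a -> exists2 b, b \in s & equivM a b) /\
  (forall i j : nat, (i < size s)%N -> (j < size s)%N ->
     equivM (nth 0 s i) (nth 0 s j) -> i = j).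

(* A class u in M with phi(u) = m has a unique representative a whose row minima are
   (m, 0, ..., 0): subtract the row minima and move their sum m into the first row.
   Writing a = m e_1 + B, the classes of degree N d (l - 1) correspond to the matrices
   B >= 0 with a zero in every row and total n = d (N (l - 1) - m).  Recording in row i
   the position p_i < d of its first zero, and the other d - 1 entries (those before the
   first zero lowered by one), identifies these B with the pairs (p, w) where w is a
   composition of n - |p| into q + 1 = l (d - 1) parts.  Hence the count is
   sum_p binom(n - |p| + q, q) over the d^l tuples p; as |p| <= q + 1, every term is
   n^q / q! + O(n^(q-1)), and d^l n^q = d^(ld-1) (N (l - 1) - m)^q.
   The bounds on phi: a nonnegative real representative gives phi(u) >= 0 and
   d phi(u) <= deg(u) holds entrywise. *)

From Stdlib Require Import Rdefinitions.
From HB Require Import structures.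
From mathcomp Require Import all_boot all_order all_algebra.
From mathcomp Require Import Rstruct.
From mathcomp Require Import zify ring lra.
Import Order.TTheory GRing.Theory Num.Theory.

Set Implicit Arguments. Unset Strict Implicit. Unset Printing Implicit Defensive.

(** * Compositions and bounded sequences *)

Fixpoint compositions (k n : nat) : seq (seq nat) :=
  if k is k'.+1 then [seq i :: c | i <- iota 0 n.+1, c <- compositions k' (n - i)]
  else if n == 0 then [:: [::]] else [::].

Lemma compositionsS k n :
  compositions k.+1 n = [seq i :: c | i <- iota 0 n.+1, c <- compositions k (n - i)].
Proof. by []. Qed.

Lemma mem_compositions k n c :
  (c \in compositions k n) = (size c == k) && (sumn c == n).
Proof.
elim: k n c => [|k IHk] n [|x c]; try by case: n.
  by rewrite compositionsS; apply/negbTE/allpairsPdep => -[i [c' []]].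
rewrite compositionsS [size _]/= [sumn _]/= eqSS.
apply/allpairsPdep/idP => [[i [c' [+ + [-> ->]]]] | /andP[/eqP size_c /eqP <-]].
  rewrite mem_iota IHk => /andP[_ lt_i] /andP[/eqP -> /eqP sum_c'].
  by rewrite eqxx; apply/eqP; lia.
exists x, c; split=> //; last by rewrite IHk size_c addKn !eqxx.
by rewrite mem_iota add0n ltnS leq_addr.
Qed.

Lemma uniq_compositions k n : uniq (compositions k n).
Proof.
elim: k n => [|k IHk] n; first by rewrite /=; case: eqP.
rewrite compositionsS; apply: allpairs_uniq_dep => [|i _|[x c] [y c'] _ _ [-> ->]] //.
exact: iota_uniq.
Qed.

Lemma hockey_stick n k : \sum_(i < n.+1) 'C(n - i + k, k) = 'C(n + k.+1, k.+1).
Proof.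
elim: n => [|n IHn]; first by rewrite big_ord1 add0n !binn.
rewrite big_ord_recl subn0.
under eq_bigr do rewrite lift0 subSS.
by rewrite IHn addSn -addnS [in RHS]addSn binS addnC.
Qed.

Lemma size_compositions k n : size (compositions k.+1 n) = 'C(n + k, k).
Proof.
elim: k n => [|k IHk] n; rewrite compositionsS size_allpairs_dep sumnE big_map.
  rewrite -[iota _ _]/(index_iota 0 n.+1) big_mkord big_ord_recr subnn /= bin0.
  by rewrite big1 // => i _; rewrite subn_eq0 leqNgt ltn_ord.
rewrite -[iota _ _]/(index_iota 0 n.+1) big_mkord.
under eq_bigr do rewrite IHk.
by rewrite hockey_stick addnS.
Qed.

Fixpoint bounded_seqs (b k : nat) : seq (seq nat) :=
  if k is k'.+1 then [seq i :: t | i <- iota 0 b, t <- bounded_seqs b k'] else [:: [::]].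

Lemma mem_bounded_seqs b k t :
  (t \in bounded_seqs b k) = (size t == k) && all (fun i => i < b) t.
Proof.
elim: k t => [|k IHk] [|x t] //.
  by apply/negbTE/allpairsP => -[[i c] []].
rewrite [size _]/= [all _ _]/= eqSS.
apply/allpairsP/idP => [[[i c] /= [+ + [-> ->]]] | /andP[/eqP size_t /andP[lt_x all_t]]].
  by rewrite mem_iota IHk => /andP[_ ->] /andP[/eqP -> ->]; rewrite eqxx.
by exists (x, t); rewrite mem_iota IHk size_t lt_x all_t eqxx.
Qed.

Lemma size_bounded_seqs b k : size (bounded_seqs b k) = b ^ k.
Proof. by elim: k => //= k IHk; rewrite size_allpairs size_iota IHk expnS. Qed.

Lemma uniq_bounded_seqs b k : uniq (bounded_seqs b k).
Proof.
elim: k => //= k IHk.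
by apply: allpairs_uniq => [|//|[x c] [y c'] _ _ [-> ->]] //; apply: iota_uniq.
Qed.

Lemma sum_insert_zero (f : nat -> nat) p e : p <= e ->
  \sum_(0 <= j < e.+1) (if j < p then (f j).+1 else if j == p then 0 else f j.-1)
  = p + \sum_(0 <= j < e) f j.
Proof.
move=> le_pe; rewrite (big_cat_nat _ (n := p)) //= 1?leqW //.
rewrite [in RHS](big_cat_nat _ (n := p)) //= big_nat_recl // ltnn eqxx add0n.
rewrite (eq_big_nat _ _ (F2 := fun j => (f j).+1)) => [|j /andP[_ ->]] //.
rewrite (eq_big_nat _ _ (m := p) (F2 := f)) => [|j /andP[le_pj _]]; last first.
  by rewrite ifN ?ifN //; lia.
under eq_bigr do rewrite -addn1.
by rewrite big_split /= sum_nat_const_nat subn0 muln1 addnCA addnA.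
Qed.

Lemma sum_blocks (F : nat -> nat) n k :
  \sum_(0 <= i < n * k) F i = \sum_(0 <= i < n) \sum_(0 <= j < k) F (i * k + j).
Proof.
rewrite big_nat_mul; apply: eq_bigr => i _.
rewrite -[i * k]add0n big_addn mulSn addnK.
by apply: eq_bigr => j _; rewrite addnC.
Qed.

Lemma sum_nth_ord (s : seq nat) n : size s = n -> \sum_(i < n) nth 0 s i = sumn s.
Proof. by move=> <-; rewrite sumnE (big_nth 0) big_mkord. Qed.

Lemma sumn_le_size_mul (s : seq nat) b : all (fun x => x < b.+1) s -> sumn s <= size s * b.
Proof. by elim: s => //= x s IHs /andP[lt_x /IHs]; rewrite mulSn; apply: leq_add. Qed.

Lemma find_iotaE (P : pred nat) n k : k < n -> P k -> (forall j, j < k -> ~~ P j) ->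
  find P (iota 0 n) = k.
Proof.
move=> lt_kn Pk notP; case: findP => [/hasPn/(_ k)|i].
  by rewrite mem_iota lt_kn Pk => /(_ isT).
rewrite size_iota => lt_in /(_ 0) Pi before_i; rewrite nth_iota ?add0n // in Pi.
case: (ltngtP i k) => [/notP|lt_ki|//]; first by rewrite Pi.
by have := before_i 0 k lt_ki; rewrite nth_iota ?add0n ?Pk // (ltn_trans lt_ki).
Qed.

(** * Binomial estimates *)

Lemma leq_expn2r m n e : m <= n -> m ^ e <= n ^ e.
Proof. by case: e => // e le_mn; rewrite leq_exp2r. Qed.

Lemma ffact_bounds x k : (x - k) ^ k <= x ^_ k <= x ^ k.
Proof.
rewrite ffact_prod -(card_ord k) -!prod_nat_const card_ord.
by apply/andP; split; apply: leq_prod => i _; have := ltn_ord i; lia.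
Qed.

Lemma subn_exp_leq a b q : b <= a -> a ^ q - b ^ q <= (a - b) * q * a ^ q.-1.
Proof.
move=> le_ba; rewrite subn_exp -mulnA leq_mul2l -[q in q * _](card_ord q).
rewrite -sum_nat_const leq_sum ?orbT // => i _.
rewrite (leq_trans (leq_mul (leqnn _) (leq_expn2r i le_ba))) // -expnD subnK //.
by have := ltn_ord i; lia.
Qed.

Lemma binomial_bounds n c q : 0 < q -> c <= q.+1 ->
  (n - q.+1) ^ q <= (if c <= n then 'C(n - c + q, q) else 0) * q`! <= (n + q.+1) ^ q.
Proof.
move=> q_gt0 le_cq; case: (leqP c n) => [le_cn|lt_nc]; last first.
  by rewrite mul0n (_ : n - q.+1 = 0) ?exp0n //; lia.
rewrite bin_ffact; have /andP[lo hi] := ffact_bounds (n - c + q) q.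
by apply/andP; split; [apply: leq_trans lo | apply: leq_trans hi _];
  apply: leq_expn2r; lia.
Qed.

Local Open Scope ring_scope.

Lemma ler_dist_natdiv (R : realFieldType) (a b Q D : nat) : (0 < Q)%N ->
  (a * Q <= b + D)%N -> (b <= a * Q + D)%N -> `|a%:R - b%:R / Q%:R : R| <= D%:R.
Proof.
move=> Q_gt0 hi lo; have Q_neq0 : Q%:R != 0 :> R by rewrite pnatr_eq0 -lt0n.
have -> : a%:R - b%:R / Q%:R = ((a * Q)%:R - b%:R) / Q%:R :> R.
  by rewrite natrM mulrBl mulfK.
rewrite normrM normfV normr_nat ler_pdivrMr ?ltr0n //.
have D_le : D%:R <= D%:R * Q%:R :> R by rewrite -natrM ler_nat leq_pmulr.
move: hi lo; rewrite -!(ler_nat R) !natrD => hi lo.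
rewrite ler_norml; apply/andP; split; lra.
Qed.

Lemma binomial_approx (R : realFieldType) n c q : (0 < q)%N -> (c <= q.+1)%N ->
  `|(if (c <= n)%N then 'C(n - c + q, q) else 0%N)%:R - (n ^ q)%:R / (q`!)%:R : R|
    <= (2 * q.+1 * q * (n + q.+1) ^ q.-1)%:R.
Proof.
move=> q_gt0 le_cq; have /andP[lo hi] := binomial_bounds n q_gt0 le_cq.
have le_n : ((n - q.+1) ^ q <= n ^ q <= (n + q.+1) ^ q)%N.
  by rewrite !leq_expn2r ?leq_subr ?leq_addr.
apply: le_trans (ler_dist_natdiv _ (D := (n + q.+1) ^ q - (n - q.+1) ^ q) (fact_gt0 q) _ _) _;
  try by move: le_n; lia.
rewrite ler_nat (leq_trans (subn_exp_leq _ (leq_trans (leq_subr _ _) (leq_addr _ _)))) //.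
by rewrite leq_mul // leq_mul //; lia.
Qed.

Lemma ler_dist_sum (R : numDomainType) (I : eqType) (r : seq I) (F G : I -> R) B :
  (forall i, i \in r -> `|F i - G i| <= B) ->
  `|\sum_(i <- r) F i - \sum_(i <- r) G i| <= B *+ size r.
Proof.
move=> le_FG; rewrite -sumrB (le_trans (ler_norm_sum _ _ _)) //.
rewrite -[size r]count_predT -iter_addr_0 -big_const_seq big_seq [leRHS]big_seq.
exact: ler_sum.
Qed.

(** * Degree and [phi] *)

Lemma mxBE r s (A B : 'M[int]_(r, s)) i j : (A - B) i j = A i j - B i j.
Proof. by rewrite !mxE. Qed.

Lemma sum_Posz (I : finType) (F : I -> nat) : \sum_i (F i)%:Z = (\sum_i F i)%N%:Z.
Proof. by rewrite (big_morph Posz PoszD (erefl 0%:Z)). Qed.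

(* The coefficients of sum_(k >= 2) t_k (eps_1 - eps_k), as they appear unfolded in
   [inL] and [in_cone]. *)
Definition eps_comb (l : nat) (V : zmodType) (t : 'I_l -> V) (i : 'I_l) : V :=
  if val i == 0%N then \sum_(k : 'I_l | val k != 0%N) t k else - t i.

Lemma sum_eps_comb (l : nat) (V : zmodType) (t : 'I_l -> V) : \sum_i eps_comb t i = 0.
Proof.
case: l t => [|l] t; first by rewrite big_ord0.
rewrite (bigD1 ord0) //= (eq_bigl (fun k : 'I_l.+1 => val k != 0%N)).
  rewrite (eq_bigr (fun k => - t k)) => [|k /negbTE nz_k]; last by rewrite /eps_comb nz_k.
  by rewrite sumrN /eps_comb /= subrr.
by move=> k; rewrite -val_eqE.
Qed.

Section Lattice.
Variables (l d : nat).

Lemma degM_inL (x : Zld l d) : inL x -> degM x = 0.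
Proof.
case=> t xE; rewrite /degM (eq_bigr (fun i => eps_comb t i *+ d)) => [|i _].
  by rewrite sumrMnl sum_eps_comb mul0rn.
by rewrite (eq_bigr (fun j => eps_comb t i)) ?sumr_const ?card_ord // => j _; rewrite xE.
Qed.

Lemma degMB (a b : Zld l d) : degM (a - b) = degM a - degM b.
Proof.
rewrite /degM -sumrB; apply: eq_bigr => i _.
by rewrite -sumrB; apply: eq_bigr => j _; apply: mxBE.
Qed.

Lemma degM_equiv (a b : Zld l d) : equivM a b -> degM a = degM b.
Proof. by move/degM_inL; rewrite degMB => /eqP; rewrite subr_eq0 => /eqP. Qed.

End Lattice.

Section RowMinimum.
Variables (l d : nat) (d_gt0 : (0 < d)%N).
Implicit Types (a : Zld l d) (i : 'I_l).

Lemma rowmin_le a i j : rowmin a i <= a i j.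
Proof. exact: bigmin_le. Qed.

Lemma rowmin_attained a i : exists j, rowmin a i = a i j.
Proof.
pose j0 : 'I_d := Ordinal d_gt0.
case: (@arg_minP _ _ _ j0 xpredT (fun j => a i j) isT) => j _ min_j.
exists j; apply/le_anti; rewrite rowmin_le; apply/bigmin_geP.
split=> [|k _]; last exact: min_j.
by rewrite -nth0 (nth_map j0) ?size_enum_ord // min_j.
Qed.

Lemma rowmin_eq a i v : (forall j, v <= a i j) -> (exists j, a i j = v) -> rowmin a i = v.
Proof.
move=> le_v [j vE]; rewrite -vE in le_v *; apply/le_anti; rewrite rowmin_le /=.
by have [k ->] := rowmin_attained a i; apply: le_v.
Qed.

Lemma phiM_ge0 a : in_cone a -> 0 <= phiM a.
Proof.
case=> x [x_ge0 [t xE]].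
have le_rowmin i : - eps_comb t i <= (rowmin a i)%:~R :> R.
  have [j ->] := rowmin_attained a i.
  by have := x_ge0 i j; have := (xE i j : _ = eps_comb t i); lra.
rewrite -(ler0z R) /phiM rmorph_sum (le_trans _ (ler_sum _ (fun i _ => le_rowmin i))) //.
by rewrite sumrN sum_eps_comb oppr0.
Qed.

Lemma phiM_le_degM a : phiM a *+ d <= degM a.
Proof.
rewrite /phiM /degM -sumrMnl; apply: ler_sum => i _.
by rewrite -[d in _ *+ d]card_ord -sumr_const; apply: ler_sum => j _; apply: rowmin_le.
Qed.

Lemma phiM_le_of_degM a D : degM a = (D * d)%N%:Z -> phiM a <= D%:Z.
Proof.
move=> degE; have := phiM_le_degM a; rewrite degE PoszM -mulr_natr.
by rewrite natz ler_pM2r // ltz_nat.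
Qed.

End RowMinimum.

(** * Normal forms of the classes with [phi = m] *)

Section Encoding.
Variables (l e m : nat) (l_gt0 : (0 < l)%N).
Local Notation d := e.+1.
Implicit Types (p w : seq nat) (c : seq nat * seq nat) (a : Zld l d).

Definition nf_rowmin (i : 'I_l) : nat := if val i == 0%N then m else 0%N.

(* The pair (p, w) encodes the matrix whose row i has its first zero at position
   [nth 0 p i] and whose other entries are read off block i of w, i.e. w_(i e), ...,
   w_(i e + e - 1), those before the first zero being incremented. *)
Definition code_entry p w (i j : nat) : nat :=
  (if j < nth 0 p i then (nth 0 w (i * e + j)).+1
   else if j == nth 0 p i then 0 else nth 0 w (i * e + j.-1))%N.

Definition code_mx c : Zld l d := \matrix_(i, j) (nf_rowmin i + code_entry c.1 c.2 i j)%N%:Z.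

Definition is_code n c : Prop := [/\ size c.1 = l, all (fun x => x < d)%N c.1,
  size c.2 = (l * e)%N & (sumn c.1 + sumn c.2)%N = n].

Definition codes n : seq (seq nat * seq nat) :=
  [seq (p, w) | p <- bounded_seqs d l,
    w <- if (sumn p <= n)%N then compositions (l * e) (n - sumn p) else [::]].

Lemma mem_codes n c : c \in codes n <-> is_code n c.
Proof.
case: c => p w; split.
  case/allpairsPdep => p' [w' [+ + [-> ->]]].
  rewrite mem_bounded_seqs => /andP[/eqP size_p all_p]; case: ifP => // le_pn.
  by rewrite mem_compositions => /andP[/eqP size_w /eqP sum_w]; split => //=; lia.
case=> /= size_p all_p size_w sum_pw; apply/allpairsPdep; exists p, w; split => //.
  by rewrite mem_bounded_seqs size_p eqxx.
by rewrite ifT ?mem_compositions ?size_w ?eqxx //=; apply/eqP; lia.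
Qed.

Lemma uniq_codes n : uniq (codes n).
Proof.
apply: allpairs_uniq_dep => [|p _|[x c] [y c'] _ _ [-> ->]] //.
- exact: uniq_bounded_seqs.
- by case: ifP => // _; apply: uniq_compositions.
Qed.

Lemma code_zero_lt n c (i : 'I_l) : is_code n c -> (nth 0%N c.1 i < d)%N.
Proof. by case=> size_p /all_nthP all_p _ _; apply: all_p; rewrite size_p ltn_ord. Qed.

Lemma code_mx_ge c i j : (nf_rowmin i)%:Z <= code_mx c i j.
Proof. by rewrite mxE lez_nat leq_addr. Qed.

Lemma code_mx_zero n c i (cc : is_code n c) :
  code_mx c i (Ordinal (code_zero_lt i cc)) = (nf_rowmin i)%:Z.
Proof. by rewrite mxE /code_entry /= ltnn eqxx addn0. Qed.

Lemma rowmin_code_mx n c i : is_code n c -> rowmin (code_mx c) i = (nf_rowmin i)%:Z.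
Proof.
move=> cc; apply: rowmin_eq => // [j|]; first exact: code_mx_ge.
by exists (Ordinal (code_zero_lt i cc)); rewrite (code_mx_zero i cc).
Qed.

Lemma sum_nf_rowmin : (\sum_i nf_rowmin i)%N = m.
Proof.
rewrite (bigD1 (Ordinal l_gt0)) //= big1 ?addn0 // => i.
by rewrite -val_eqE /nf_rowmin => /negbTE ->.
Qed.

Lemma degM_code_mx n c : is_code n c -> degM (code_mx c) = (d * m + n)%N%:Z.
Proof.
case: c => p w cc; case: (cc) => /= size_p _ size_w sum_pw.
have row_sum (i : 'I_l) : (\sum_(j < d) code_entry p w i j
                  = nth 0%N p i + \sum_(0 <= j < e) nth 0%N w (i * e + j))%N.
  by rewrite -(big_mkord xpredT) sum_insert_zero // -ltnS (code_zero_lt i cc).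
rewrite /degM (eq_bigr (fun i => (\sum_(j < d) (nf_rowmin i + code_entry p w i j))%N%:Z)).
  rewrite sum_Posz; congr Posz.
  under eq_bigr => i _ do rewrite big_split sum_nat_const card_ord row_sum.
  rewrite !big_split -big_distrr sum_nf_rowmin sum_nth_ord //.
  rewrite -(big_mkord xpredT (fun i => \sum_(0 <= j < e) nth 0%N w (i * e + j)))%N.
  by rewrite -sum_blocks big_mkord (sum_nth_ord size_w) /=; lia.
by move=> i _; rewrite -sum_Posz; apply: eq_bigr => j _; rewrite mxE.
Qed.

Lemma phiM_code_mx n c : is_code n c -> phiM (code_mx c) = m%:Z.
Proof.
move=> cc; rewrite /phiM (eq_bigr _ (fun i _ => rowmin_code_mx i cc)).
by rewrite sum_Posz sum_nf_rowmin.
Qed.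

Lemma in_cone_code_mx c : in_cone (code_mx c).
Proof.
exists (\matrix_(i, j) (code_mx c i j)%:~R); split=> [i j|].
  by rewrite mxE ler0z (le_trans _ (code_mx_ge c i j)).
by exists (fun _ => 0) => i j; rewrite mxE subrr big1 ?oppr0 //; case: ifP.
Qed.

(* Every row of a code matrix attains its minimum [nf_rowmin i] at the first zero; comparing
   two code matrices there forces the lattice vector relating them to vanish. *)
Lemma code_mx_equiv n n' c c' : is_code n c -> is_code n' c' ->
  equivM (code_mx c) (code_mx c') -> code_mx c = code_mx c'.
Proof.
move=> cc cc' [t tE].
have t0 i : val i != 0%N -> t i = 0.
  move=> /negbTE nz_i.
  have := tE i (Ordinal (code_zero_lt i cc)); have := tE i (Ordinal (code_zero_lt i cc')).
  rewrite !mxBE (code_mx_zero i cc) (code_mx_zero i cc') nz_i.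
  have := code_mx_ge c i (Ordinal (code_zero_lt i cc')).
  have := code_mx_ge c' i (Ordinal (code_zero_lt i cc)).
  rewrite /nf_rowmin nz_i; lia.
apply/matrixP => i j; apply/eqP; rewrite -subr_eq0 -mxBE tE /eps_comb.
case: ifP => [_|/negbT/t0 ->]; last by rewrite oppr0.
by rewrite big1 // => k; apply: t0.
Qed.

Section Decoding.
Variable a : Zld l d.

(* Indexed by nat (out-of-range indices are clamped by [insubd]) so that [decode] can be
   written with [mkseq]. *)
Definition gap (i j : nat) : nat :=
  `|a (insubd (Ordinal l_gt0) i) (insubd ord0 j) - rowmin a (insubd (Ordinal l_gt0) i)|.

Definition first_zero (i : nat) : nat := find (fun j => gap i j == 0%N) (iota 0 d).

Definition decode : seq nat * seq nat :=
  (mkseq first_zero l,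
   mkseq (fun k => let i := (k %/ e)%N in let j := (k %% e)%N in
                   if (j < first_zero i)%N then (gap i j).-1 else gap i j.+1) (l * e)).

Lemma gapE (i : 'I_l) (j : 'I_d) : (gap i j)%:Z = a i j - rowmin a i.
Proof. by rewrite /gap !valKd gez0_abs // subr_ge0 rowmin_le. Qed.

Lemma first_zero_spec (i : 'I_l) :
  [/\ (first_zero i < d)%N, gap i (first_zero i) = 0%N
    & forall j, (j < first_zero i)%N -> gap i j != 0%N].
Proof.
have [j0 min_j0] := rowmin_attained (ltn0Sn e) a i.
have has0 : has (fun j => gap i j == 0%N) (iota 0 d).
  apply/hasP; exists (val j0); first by rewrite mem_iota /= ltn_ord.
  by rewrite -(eqz_nat _ 0) (gapE i j0) min_j0 subrr.
have lt_fz : (first_zero i < d)%N by move: has0; rewrite has_find size_iota.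
split=> // [|j lt_j]; first by have /eqP := nth_find 0%N has0; rewrite nth_iota.
by have /negbT := before_find 0%N lt_j; rewrite nth_iota // (ltn_trans lt_j).
Qed.

Lemma code_entry_decode (i : 'I_l) j : (j < d)%N ->
  code_entry decode.1 decode.2 i j = gap i j.
Proof.
move=> lt_jd; have [lt_fz gap_fz before_fz] := first_zero_spec i.
have blockE j' : (j' < e)%N -> ((i * e + j') %/ e = i)%N * ((i * e + j') %% e = j')%N.
  by move=> lt_j'e; rewrite divnMDl ?modnMDl ?divn_small ?modn_small ?addn0 //; lia.
have lt_le j' : (j' < e)%N -> (i * e + j' < l * e)%N by have := ltn_ord i; nia.
rewrite /code_entry /= nth_mkseq //.
case: (ltngtP j (first_zero i)) => [lt_j|lt_j|->//].
- have lt_je : (j < e)%N by lia.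
  by rewrite nth_mkseq ?lt_le //= !blockE // lt_j prednK // lt0n before_fz.
- have lt_je : (j.-1 < e)%N by lia.
  rewrite nth_mkseq ?lt_le //= !blockE // ifN ?prednK //; lia.
Qed.

Lemma code_mx_decode i j : code_mx decode i j = (nf_rowmin i)%:Z + (a i j - rowmin a i).
Proof. by rewrite mxE PoszD code_entry_decode // gapE. Qed.

Lemma is_code_decode : is_code (sumn decode.1 + sumn decode.2) decode.
Proof.
split; rewrite /= ?size_mkseq //.
apply/(all_nthP 0%N) => i; rewrite size_mkseq => lt_il.
by rewrite nth_mkseq //; case: (first_zero_spec (Ordinal lt_il)).
Qed.

Lemma equivM_decode : phiM a = m%:Z -> equivM a (code_mx decode).
Proof.
move=> phi_a; exists (fun k => - rowmin a k) => i j.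
rewrite mxBE code_mx_decode /nf_rowmin; case: ifP => [i0|]; last by rewrite opprK; lra.
rewrite sumrN (eq_bigl (fun k => k != i)) => [|k]; last by rewrite -val_eqE /= (eqP i0).
by move: phi_a; rewrite /phiM (bigD1 i) //= => <-; lra.
Qed.

End Decoding.

Lemma decode_code_mx n c : is_code n c -> decode (code_mx c) = c.
Proof.
case: c => p w cc; case: (cc) => /= size_p _ size_w _.
have gap_code_mx i j : (i < l)%N -> (j < d)%N -> gap (code_mx (p, w)) i j = code_entry p w i j.
  move=> lt_il lt_jd; apply/eqP; rewrite -eqz_nat.
  have := gapE (code_mx (p, w)) (Ordinal lt_il) (Ordinal lt_jd).
  by rewrite (rowmin_code_mx _ cc) mxE PoszD addrC addKr => ->.
have first_zero_code_mx i : (i < l)%N -> first_zero (code_mx (p, w)) i = nth 0%N p i.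
  move=> lt_il; apply: find_iotaE => [|//|j lt_j].
  - exact: (code_zero_lt (Ordinal lt_il) cc).
  - by rewrite gap_code_mx ?(code_zero_lt (Ordinal lt_il) cc) // /code_entry ltnn eqxx.
  have lt_jd := ltn_trans lt_j (code_zero_lt (Ordinal lt_il) cc).
  by rewrite gap_code_mx // /code_entry lt_j.
congr pair; apply: (@eq_from_nth _ 0%N); rewrite ?size_mkseq // => k lt_k.
  by rewrite nth_mkseq ?first_zero_code_mx // -size_p.
have lt_kel : (k %/ e < l)%N by rewrite ltn_divLR; lia.
have lt_ke : (k %% e < e)%N by rewrite ltn_pmod; lia.
have kE : (k %/ e * e + k %% e = k)%N by rewrite -divn_eq.
rewrite nth_mkseq ?size_w // /= first_zero_code_mx //.
have lt_kd : (k %% e < d)%N by apply: ltnW.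
case: ifP => lt_kp; rewrite gap_code_mx // /code_entry; first by rewrite lt_kp kE.
have [-> ->] : ((k %% e).+1 < nth 0%N p (k %/ e))%N = false /\
               ((k %% e).+1 == nth 0%N p (k %/ e)) = false.
  by split; apply/negbTE; lia.
by rewrite /= kE.
Qed.

Lemma code_mx_inj n n' c c' : is_code n c -> is_code n' c' -> code_mx c = code_mx c' -> c = c'.
Proof. by move=> cc cc' eq_c; rewrite -(decode_code_mx cc) eq_c (decode_code_mx cc'). Qed.

Lemma exists_code n a : phiM a = m%:Z -> degM a = (d * m + n)%N%:Z ->
  exists2 c, is_code n c & equivM a (code_mx c).
Proof.
move=> phi_a deg_a; exists (decode a); last exact: equivM_decode.
have := degM_equiv (equivM_decode phi_a).
rewrite (degM_code_mx (is_code_decode a)) deg_a => -[/addnI ->].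
exact: is_code_decode.
Qed.

Lemma reps_of_codes N n : (d * m + n = N * d * (l - 1))%N ->
  reps_of (@Pset l d N m) (map code_mx (codes n)).
Proof.
move=> degE; have code_codes c : c \in codes n -> is_code n c by move/mem_codes.
split; [|split].
- move=> _ /mapP[c /code_codes cc ->]; split; first exact: in_cone_code_mx.
  by rewrite (phiM_code_mx cc) (degM_code_mx cc) degE.
- move=> a [_ [phi_a deg_a]].
  have [c cc eq_ac] := exists_code phi_a (etrans deg_a (congr1 Posz (esym degE))).
  by exists (code_mx c) => //; apply/map_f/mem_codes.
- move=> i j; rewrite size_map => lt_i lt_j; rewrite !(nth_map ([::], [::])) // => eq_ij.
  have ci := code_codes _ (mem_nth ([::], [::]) lt_i).
  have cj := code_codes _ (mem_nth ([::], [::]) lt_j).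
  apply/eqP; rewrite -(nth_uniq ([::], [::]) lt_i lt_j (uniq_codes n)); apply/eqP.
  exact: code_mx_inj ci cj (code_mx_equiv ci cj eq_ij).
Qed.

Lemma size_codes_approx (R : realFieldType) n q : (l * e)%N = q.+1 -> (0 < q)%N ->
  `|(size (codes n))%:R - (d ^ l * n ^ q)%N%:R / (q`!)%:R : R|
    <= (d ^ l * (2 * q.+1 * q * (n + q.+1) ^ q.-1))%N%:R.
Proof.
move=> lq q_gt0; rewrite size_allpairs_dep sumnE big_map natr_sum.
under eq_bigr => p _ do rewrite (fun_if size) lq size_compositions.
have -> : (d ^ l * n ^ q)%N%:R / (q`!)%:R
          = \sum_(p <- bounded_seqs d l) (n ^ q)%:R / (q`!)%:R :> R.
  by rewrite big_const_seq count_predT size_bounded_seqs iter_addr_0 -mulrnAl -mulrnA mulnC.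
apply: le_trans (@ler_dist_sum R _ _ _ _ (2 * q.+1 * q * (n + q.+1) ^ q.-1)%N%:R _) _.
  move=> p; rewrite mem_bounded_seqs => /andP[/eqP size_p /sumn_le_size_mul].
  by rewrite size_p lq => le_p; apply: binomial_approx.
by rewrite size_bounded_seqs -mulrnA mulnC.
Qed.

End Encoding.

Theorem mainTheorem13 (l d : nat) (hl : (2 <= l)%N) (hd : (2 <= d)%N) :
  (forall (N : nat) (a : Zld l d), in_cone a ->
     degM a = (N * (l - 1) * d)%:Z ->
     0 <= phiM a /\ phiM a <= ((l - 1) * N)%:Z) /\
  (exists C : R, exists N0 : nat, forall N : nat, (N0 <= N)%N ->
     forall m : nat, (m <= (l - 1) * N)%N ->
     exists s : seq (Zld l d), reps_of (@Pset l d N m) s /\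
       `| (size s)%:R
          - (d ^ (l * d - 1))%N%:R
            * ((N * (l - 1) - m) ^ (l * (d - 1) - 1))%N%:R
            / ((l * (d - 1) - 1)`!)%N%:R |
       <= C * (N ^ (l * (d - 1) - 2))%N%:R).
Proof.
have l_gt0 : (0 < l)%N by lia.
split=> [N a a_cone degE|].
  have d_gt0 : (0 < d)%N by lia.
  split; first exact: phiM_ge0.
  by apply: (phiM_le_of_degM d_gt0); rewrite degE; congr Posz; lia.
case: d hd => [|e] // e_gt0; set q := (l * e).-1.
have lq : (l * e)%N = q.+1 by rewrite prednK // muln_gt0 l_gt0.
have q_gt0 : (0 < q)%N by rewrite -ltnS -lq (leq_trans hl) // leq_pmulr.
exists (e.+1 ^ l * (2 * q.+1 * q * (e.+1 * (l - 1) + q.+1) ^ q.-1))%N%:R, 1%N.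
move=> N N_gt0 m le_m; pose n := (e.+1 * (N * (l - 1) - m))%N.
have le_n : (n <= e.+1 * (l - 1) * N)%N by rewrite -mulnA leq_mul2l mulnC leq_subr orbT.
exists (map (code_mx l e m) (codes l e n)); split.
  apply: reps_of_codes => //; rewrite /n -mulnDr subnKC; first by rewrite mulnCA mulnA.
  by rewrite mulnC.
have [-> -> ->] : [/\ l * e.+1 - 1 = l + q, l * (e.+1 - 1) - 1 = q
                    & l * (e.+1 - 1) - 2 = q.-1]%N.
  by rewrite subn1 mulnS subSS subn0 addnC; split; lia.
rewrite size_map.
rewrite -natrM (_ : e.+1 ^ (l + q) * _ = e.+1 ^ l * n ^ q)%N; last first.
  by rewrite expnD expnMn mulnA.
apply: le_trans (size_codes_approx _ n lq q_gt0) _.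
set K := (2 * q.+1 * q)%N; set X := (e.+1 * (l - 1) + q.+1)%N.
rewrite -natrM ler_nat -2!mulnA -expnMn leq_mul // leq_mul // leq_expn2r //.
by rewrite mulnDl leq_add // leq_pmulr.
Qed.
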